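(* Let $\pi\in\mathfrak{S}_n$ avoid $132$, and let $\{a,b,c\}$ and $\{d,e,f\}$ be the element sets of two $3$-cycles of $\pi$, with $a<b<c$, $d<e<f$ and $a<d$. Then one of the following holds: (A) $a<d<b<e<c<f$; (B) $a<d<e<b<f<c$; (C) $a<d<e<f<b<c$. Furthermore, if one of the two $3$-cycles is of form $(1,2,3)$ and the other is of form $(1,3,2)$, then configuration (C) holds.
   Context: A permutation avoids $132$ if there are no indices $i<j<k$ with $\pi_i<\pi_k<\pi_j$. A $3$-cycle on elements $a<b<c$ is of form $(1,2,3)$ if it is $(a,b,c)$, i.e. $a\mapsto b\mapsto c\mapsto a$, and of form $(1,3,2)$ if it is $(a,c,b)$, i.e. $a\mapsto c\mapsto b\mapsto a$. *)

From mathcomp Require Import all_boot all_order all_fingroup.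
Set Implicit Arguments. Unset Strict Implicit. Unset Printing Implicit Defensive.

Definition avoids132 (n : nat) (s : {perm 'I_n}) : Prop :=
  ~ exists i j k : 'I_n, [/\ i < j, j < k & (s i < s k < s j)%N].

Definition cycle123 (n : nat) (s : {perm 'I_n}) (a b c : 'I_n) : Prop :=
  [/\ (a < b < c)%N, s a = b, s b = c & s c = a].

Definition cycle132 (n : nat) (s : {perm 'I_n}) (a b c : 'I_n) : Prop :=
  [/\ (a < b < c)%N, s a = c, s c = b & s b = a].

Definition is3cycle (n : nat) (s : {perm 'I_n}) (a b c : 'I_n) : Prop :=
  cycle123 s a b c \/ cycle132 s a b c.

From mathcomp Require Import all_boot all_order all_fingroup.
From mathcomp Require Import zify.

(* In a 132-avoiding permutation, the positions to the right of i whose values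
   exceed s i carry increasing values.  Every 3-cycle d < e < f contains a
   descent, (e, f) for (d,e,f) and (d, f) for (d,f,e), so all positions before
   e, resp. before d, carry values at least d, resp. e.  Since the cycle on
   a < b < c sends one of b, c to a < d, this pushes b or c past d or e; one
   more application of monotonicity, above s a, s d or s e according to the
   two cycle types, then leaves only the interleavings (A), (B), (C), and only
   (C) when the types differ.  The cycles are disjoint because a 3-cycle
   reaches its minimum from each of its elements. *)

Set Implicit Arguments.
Unset Strict Implicit.
Unset Printing Implicit Defensive.

Section ThreeCycles.

Variables (n : nat) (s : {perm 'I_n}).
Implicit Types x y z u v w t : 'I_n.

Lemma is3cycle_closed x y z t :
  is3cycle s x y z -> t \in [:: x; y; z] -> s t \in [:: x; y; z].
Proof.
by case=> -[_ sx sy sz]; rewrite !inE => /or3P[]/eqP->;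
  rewrite ?sx ?sy ?sz !eqxx ?orbT.
Qed.

Lemma is3cycle_reach x y z t :
  is3cycle s x y z -> t \in [:: x; y; z] -> x \in [:: t; s t; s (s t)].
Proof.
by case=> -[_ sx sy sz]; rewrite !inE => /or3P[]/eqP->;
  rewrite ?sx ?sy ?sz !eqxx ?orbT.
Qed.

Lemma is3cycle_disjoint x y z u v w t :
  is3cycle s x y z -> is3cycle s u v w -> x < u ->
  t \in [:: x; y; z] -> t \notin [:: u; v; w].
Proof.
move=> xyz uvw x_lt_u tx; apply/negP => tu.
have u_min : {in [:: u; v; w], forall r : 'I_n, u <= r}.
  by case: uvw => -[/andP[uv vw] _ _ _] r; rewrite !inE => /or3P[]/eqP->; lia.
have /allP/(_ x (is3cycle_reach xyz tx))/u_min :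
    all [in [:: u; v; w]] [:: t; s t; s (s t)].
  have stu := is3cycle_closed uvw tu.
  by rewrite /= tu stu (is3cycle_closed uvw stu).
by rewrite leqNgt x_lt_u.
Qed.

End ThreeCycles.

Section Avoids132.

Variables (n : nat) (s : {perm 'I_n}).
Hypothesis s132 : avoids132 s.
Implicit Types i j k d e f : 'I_n.

Lemma avoids132_incr_above i j k : i < j < k -> s i < s k -> s j < s k.
Proof.
move=> /andP[ij jk] sik.
rewrite ltn_neqAle leqNgt val_eqE (inj_eq perm_inj) -val_eqE neq_ltn jk /=.
by apply/negP => skj; apply: s132; exists i, j, k; rewrite sik skj.
Qed.

Lemma cycle123_lt_mid d e f i : cycle123 s d e f -> i < e -> d <= s i.
Proof.
move=> [/andP[de ef] _ se sf] ie; rewrite leqNgt; apply/negP => sid.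
have := @avoids132_incr_above i e f; rewrite ie ef se sf => /(_ isT sid).
by rewrite ltnNge (ltnW (ltn_trans de ef)).
Qed.

Lemma cycle132_lt_min d e f i : cycle132 s d e f -> i < d -> e <= s i.
Proof.
move=> [/andP[de ef] sd sf _] id; rewrite leqNgt; apply/negP => sie.
have := @avoids132_incr_above i d f; rewrite id (ltn_trans de ef) sd sf.
by move=> /(_ isT sie); rewrite ltnNge (ltnW ef).
Qed.

End Avoids132.

Definition configA (a b c d e f : nat) :=
  [&& a < d, d < b, b < e, e < c & c < f].
Definition configB (a b c d e f : nat) :=
  [&& a < d, d < e, e < b, b < f & f < c].
Definition configC (a b c d e f : nat) :=
  [&& a < d, d < e, e < f, f < b & b < c].

Section TwoCycles.

Variables (n : nat) (s : {perm 'I_n}) (a b c d e f : 'I_n).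
Hypotheses (s132 : avoids132 s) (a_lt_d : a < d).

Local Notation A := (configA a b c d e f).
Local Notation B := (configB a b c d e f).
Local Notation C := (configC a b c d e f).
Local Notation incr i j k := (@avoids132_incr_above _ _ s132 i j k).

Lemma two_cycles_distinct : is3cycle s a b c -> is3cycle s d e f ->
  [/\ b != d :> nat, b != e :> nat, b != f :> nat,
      c != e :> nat & c != f :> nat].
Proof.
move=> abc def.
have neq x y : x \in [:: a; b; c] -> y \in [:: d; e; f] -> x != y :> nat.
  move=> /(is3cycle_disjoint abc def a_lt_d) x_notin y_in.
  by rewrite val_eqE; apply: contraNneq x_notin => ->.
by rewrite !neq // !inE eqxx ?orbT.
Qed.

Lemma config_cycle123_cycle123 :
  cycle123 s a b c -> cycle123 s d e f -> [|| A, B | C].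
Proof.
move=> abc def.
have [ne_bd ne_be ne_bf ne_ce ne_cf] :=
  two_cycles_distinct (or_introl abc) (or_introl def).
case: (abc) (def) => [/andP[ab bc] sa sb sc] [/andP[de ef] _ se sf].
have d_le_b : d <= b by rewrite -sa (cycle123_lt_mid s132 def) //; lia.
have e_le_c : e <= c.
  by rewrite leqNgt; apply/negP => /(cycle123_lt_mid s132 def); rewrite sc; lia.
have b_lt_e_c_lt_f : b < e -> c < f.
  by move=> b_lt_e; have := incr a b e; rewrite sa sb se; apply; lia.
have e_lt_b_f_lt_c : e < b -> f < c.
  by move=> e_lt_b; have := incr a e b; rewrite sa sb se; apply; lia.
rewrite /configA /configB /configC; lia.
Qed.

Lemma config_cycle132_cycle123 : cycle132 s a b c -> cycle123 s d e f -> C.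
Proof.
move=> abc def.
have [ne_bd ne_be ne_bf ne_ce ne_cf] :=
  two_cycles_distinct (or_intror abc) (or_introl def).
case: (abc) (def) => [/andP[ab bc] _ sc sb] [/andP[de ef] sd se _].
have e_le_b : e <= b.
  by rewrite leqNgt; apply/negP => /(cycle123_lt_mid s132 def); rewrite sb; lia.
have f_lt_b : f < b.
  by have := incr d e c; rewrite sd se sc; apply; lia.
rewrite /configC; lia.
Qed.

Lemma config_cycle123_cycle132 : cycle123 s a b c -> cycle132 s d e f -> C.
Proof.
move=> abc def.
have [ne_bd ne_be ne_bf ne_ce ne_cf] :=
  two_cycles_distinct (or_introl abc) (or_intror def).
case: (abc) (def) => [/andP[ab bc] sa sb _] [/andP[de ef] _ sf se].
have e_le_b : e <= b by rewrite -sa (cycle132_lt_min s132 def).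
have b_lt_f_c_lt_e : b < f -> c < e.
  by move=> b_lt_f; have := incr e b f; rewrite se sb sf; apply; lia.
rewrite /configC; lia.
Qed.

Lemma config_cycle132_cycle132 :
  cycle132 s a b c -> cycle132 s d e f -> [|| A, B | C].
Proof.
move=> abc def.
have [ne_bd ne_be ne_bf ne_ce ne_cf] :=
  two_cycles_distinct (or_intror abc) (or_intror def).
case: (abc) (def) => [/andP[ab bc] sa sc sb] [/andP[de ef] _ sf se].
have d_le_b : d <= b.
  by rewrite leqNgt; apply/negP => /(cycle132_lt_min s132 def); rewrite sb; lia.
have e_le_c : e <= c by rewrite -sa (cycle132_lt_min s132 def).
have f_lt_c_e_lt_b : f < c -> e < b.
  by move=> f_lt_c; have := incr e f c; rewrite se sf sc; apply; lia.
have c_lt_f_b_lt_e : c < f -> b < e.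
  by move=> c_lt_f; have := incr e c f; rewrite se sc sf; apply; lia.
rewrite /configA /configB /configC; lia.
Qed.

End TwoCycles.

Theorem lemma4p1 (n : nat) (s : {perm 'I_n}) (a b c d e f : 'I_n) :
  avoids132 s ->
  (a < b < c)%N -> (d < e < f)%N -> (a < d)%N ->
  is3cycle s a b c -> is3cycle s d e f ->
  [\/ [&& a < d, d < b, b < e, e < c & c < f]%N,
      [&& a < d, d < e, e < b, b < f & f < c]%N
    | [&& a < d, d < e, e < f, f < b & b < c]%N ] /\
  ((cycle123 s a b c /\ cycle132 s d e f) \/
   (cycle132 s a b c /\ cycle123 s d e f) ->
   [&& a < d, d < e, e < f, f < b & b < c]%N).
Proof.
move=> s132 _ _ a_lt_d abc def; split.
  case: abc def => [abc|abc] [def|def].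
  - exact/or3P/(config_cycle123_cycle123 s132 a_lt_d abc def).
  - exact/Or33/(config_cycle123_cycle132 s132 a_lt_d abc def).
  - exact/Or33/(config_cycle132_cycle123 s132 a_lt_d abc def).
  - exact/or3P/(config_cycle132_cycle132 s132 a_lt_d abc def).
by case=> -[];
  [exact: config_cycle123_cycle132 | exact: config_cycle132_cycle123].
Qed.
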